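(* As formal power series in $x$, $$F(u,1,x):=\sum_{n\ge1}\frac{x^n}{n!}\sum_{p=1}^n\sum_{\pi\in\mathfrak S_n}u^{\chi_n(\pi,p)}=\frac{u}{2-u}\Bigl[(1-x)^{-2}-(1-x)^{-u}\Bigr],$$ and $$G(u,x):=\sum_{n\ge1}\frac{x^n}{n!}\sum_{\pi\in\mathfrak S_n}u^{\chi_n(\pi,n)}=\frac{u^2}{2-u}\Bigl[\frac1{1-x}+\frac{(1-x)^{1-u}}{1-u}\Bigr]-\frac{u^2}{1-u}-u\log(1-x).$$
   Context: $[n]=\{1,\dots,n\}$, $\mathfrak S_n$ the symmetric group on $[n]$, right action $i\pi$, products composed left to right; $\tau(i,j)$ the transposition exchanging $i,j$ ($\tau(n,n)$ the identity). For $\pi\in\mathfrak S_n$ let $q(\pi)=n\pi^{-1}$, and for $n\ge2$ let $\downarrow\pi\in\mathfrak S_{n-1}$ be the restriction to $[n-1]$ of $\tau(n,q(\pi))\pi$. The ''number of moves'' function $\chi_n(\pi,p)$, $\pi\in\mathfrak S_n$, $p\in[n]$, is defined recursively: $\chi_1(\mathrm{id},1)=1$; for $n\ge2$, with $q=q(\pi)$: $\chi_n(\pi,p)=\chi_{n-1}(\downarrow\pi,p)$ if $p\ne n,p\ne q$; $=1+\chi_{n-1}(\downarrow\pi,q)$ if $p=n\ne q$; $=1$ if $p=q\ne n$; $=1$ if $p=q=n$. Coefficients are rational functions of $u$; $(1-x)^{-u}$ and $(1-x)^{1-u}$ denote the binomial series. *)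

From HB Require Import structures.
From mathcomp Require Import all_boot all_order all_algebra all_fingroup.
Set Implicit Arguments. Unset Strict Implicit. Unset Printing Implicit Defensive.
Import Order.TTheory GRing.Theory.

(* Permutations of [n] = {1..n} are encoded as functions nat -> nat;
   only their values on 1..n matter. *)

Definition tau (n q : nat) (i : nat) : nat :=
  if i == n then q else if i == q then n else i.

Definition qpos (n : nat) (f : nat -> nat) : nat :=
  (find (fun i => f i == n) (iota 1 n)).+1.

(* down pi = restriction of tau(n,q(pi)) pi (composition left to right:
   i (tau pi) = (i tau) pi) *)
Definition down (n : nat) (f : nat -> nat) : nat -> nat :=
  fun i => f (tau n (qpos n f) i).

Fixpoint chi (n : nat) (f : nat -> nat) (p : nat) : nat :=
  match n with
  | 0 => 0
  | n'.+1 =>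
    if n' == 0 then 1 else
    let q := qpos n f in
    if (p != n) && (p != q) then chi n' (down n f) p
    else if (p == n) && (p != q) then (chi n' (down n f) q).+1
    else 1
  end.

(* A permutation of 'I_n (= {0..n-1}) viewed as a permutation of {1..n}
   acting by i |-> i pi. *)
Definition permfun (n : nat) (s : {perm 'I_n}) : nat -> nat :=
  fun i => match @insub _ (fun k => k < n) _ i.-1 with
           | Some j => (s j).+1
           | None => i
           end.

Local Open Scope ring_scope.

(* coefficient of x^n in F(u,1,x) *)
Definition Fcoef (R : fieldType) (u : R) (n : nat) : R :=
  if n == 0%N then 0 else
  (n`!%:R)^-1 * \sum_(p < n) \sum_(s : {perm 'I_n}) u ^+ chi n (permfun s) p.+1.

(* coefficient of x^n in G(u,x) *)
Definition Gcoef (R : fieldType) (u : R) (n : nat) : R :=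
  if n == 0%N then 0 else
  (n`!%:R)^-1 * \sum_(s : {perm 'I_n}) u ^+ chi n (permfun s) n.

Definition gbinom (R : fieldType) (a : R) (n : nat) : R :=
  (\prod_(k < n) (a - k%:R)) / n`!%:R.

(* coefficient of x^n in the binomial series (1 - x)^a *)
Definition pow1mx (R : fieldType) (a : R) (n : nat) : R :=
  (-1) ^+ n * gbinom a n.

(* coefficient of x^n in 1/(1-x) *)
Definition geomc (R : fieldType) (n : nat) : R := 1.

(* coefficient of x^n in the constant series c *)
Definition cstc (R : fieldType) (c : R) (n : nat) : R :=
  if n == 0%N then c else 0.

(* coefficient of x^n in log(1 - x) = - sum_{n>=1} x^n / n *)
Definition log1mx (R : fieldType) (n : nat) : R :=
  if n == 0%N then 0 else - (n%:R)^-1.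

(* Every permutation of [m+1] is uniquely tau(m+1, q) followed by a permutation
   of [m] extended by m+1 |-> m+1, and for it q(pi) = q and down pi is that
   permutation of [m]. Summing the recursion for chi over this decomposition gives,
   for A_n(p) = sum_pi u^chi_n(pi,p) and B_n = sum_p A_n(p),
     A_(m+1)(p) = m A_m(p) + u m!   (p <= m),   A_(m+1)(m+1) = u B_m + u m!,
   hence B_(m+1) = (m + u) B_m + u (m+1)!. This first-order recurrence is solved by
   n! u/(2-u) [(n+1) - [x^n](1-x)^(-u)], which is the coefficient identity for F;
   the one for G then follows from A_(n+1)(n+1) = u B_n + u n!. *)

From HB Require Import structures.
From mathcomp Require Import all_boot all_order all_algebra all_fingroup.
From mathcomp Require Import zify ring.
Import Order.TTheory GRing.Theory.
Set Implicit Arguments. Unset Strict Implicit. Unset Printing Implicit Defensive.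

Lemma qpos_ext n f g : {in [pred i | 0 < i <= n], f =1 g} -> qpos n f = qpos n g.
Proof.
move=> eq_fg; congr _.+1; apply: eq_in_find => i.
by rewrite mem_iota add1n ltnS => i_n; rewrite eq_fg.
Qed.

Lemma chi_ext n f g p : {in [pred i | 0 < i <= n], f =1 g} -> chi n f p = chi n g p.
Proof.
elim: n f g p => [//|n IHn] f g p eq_fg /=.
have eq_down : {in [pred i | 0 < i <= n], down n.+1 f =1 down n.+1 g}.
  move=> i; rewrite !inE => i_n; rewrite /down (qpos_ext eq_fg) eq_fg // inE /tau.
  have : 0 < qpos n.+1 g by [].
  by case: eqP => [|_]; [lia | case: eqP => _; lia].
by rewrite (qpos_ext eq_fg) !(IHn _ _ _ eq_down).
Qed.

Lemma permfunE n (s : 'S_n) (k : 'I_n) : permfun s k.+1 = (s k).+1.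
Proof. by rewrite /permfun /= valK. Qed.

Lemma qpos_permfun n (s : 'S_n) (q : 'I_n) : s q = n.-1 :> nat ->
  qpos n (permfun s) = q.+1.
Proof.
move=> sq; congr _.+1.
have n_gt0 : 0 < n by apply: leq_ltn_trans (ltn_ord q).
have -> : find (fun i => permfun s i == n) (iota 1 n) = index q.+1 (iota 1 n).
  apply: eq_in_find => i; rewrite mem_iota add1n ltnS => /andP[i_gt0 i_le].
  have [k ->] : exists k : 'I_n, i = k.+1.
    have k_lt : i.-1 < n by lia.
    by exists (Ordinal k_lt); rewrite /= prednK.
  rewrite permfunE /=; apply/eqP/eqP => [skn | /succn_inj/val_inj ->]; last by rewrite sq prednK.
  have : s k = s q by apply: val_inj; rewrite /= sq; lia.
  by move/perm_inj->.
by rewrite -add1n -(nth_iota 0 1 (ltn_ord q)) index_uniq ?iota_uniq ?size_iota.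
Qed.

(* Inverse of pi |-> (q(pi), down pi): see [qpos_up_perm] and [down_up_perm]. *)
Definition up_perm m (q : 'I_m.+1) (s : 'S_m) : 'S_m.+1 :=
  (tperm q ord_max * lift_perm ord_max ord_max s)%g.

Lemma up_perm_q m (q : 'I_m.+1) (s : 'S_m) : up_perm q s q = ord_max.
Proof. by rewrite permM tpermL lift_perm_id. Qed.

Lemma up_perm_lift m (q : 'I_m.+1) (s : 'S_m) (k : 'I_m) :
  up_perm q s (tperm q ord_max (lift ord_max k)) = lift ord_max (s k).
Proof. by rewrite permM tpermK lift_perm_lift. Qed.

Lemma up_perm_inj m : injective (fun qs : 'I_m.+1 * 'S_m => up_perm qs.1 qs.2).
Proof.
move=> [q s] [q' s'] /= eq_up.
have eq_q : q = q'.
  by apply: (@perm_inj _ (up_perm q s)); rewrite up_perm_q eq_up up_perm_q.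
rewrite -eq_q in eq_up *; congr (_, _); apply/permP => k.
by apply: (@lift_inj _ ord_max); rewrite -!(up_perm_lift q) eq_up.
Qed.

Lemma sum_up_perm (V : nmodType) m (F : 'S_m.+1 -> V) :
  (\sum_(s : 'S_m.+1) F s = \sum_(q < m.+1) \sum_(s : 'S_m) F (up_perm q s))%R.
Proof.
rewrite pair_bigA /= (reindex (fun qs : 'I_m.+1 * 'S_m => up_perm qs.1 qs.2)) //.
apply/onW_bij/inj_card_bij; first exact: up_perm_inj.
by rewrite card_prod card_ord !card_Sn factS.
Qed.

Lemma qpos_up_perm m (q : 'I_m.+1) (s : 'S_m) : qpos m.+1 (permfun (up_perm q s)) = q.+1.
Proof. by apply: qpos_permfun; rewrite up_perm_q. Qed.

Lemma tau_tperm n (q j : 'I_n.+1) : tau n.+1 q.+1 j.+1 = (tperm q ord_max j).+1.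
Proof.
rewrite /tau permE /= !eqSS.
have -> : (j == n :> nat) = (j == ord_max) by [].
case: (j =P q) => [-> | /eqP ne_jq]; first by case: (q =P ord_max) => [-> | _]; rewrite ?eqxx.
have -> : (j == q :> nat) = false by exact: negbTE.
by case: (j =P ord_max).
Qed.

Lemma down_up_perm m (q : 'I_m.+1) (s : 'S_m) :
  {in [pred i | 0 < i <= m], down m.+1 (permfun (up_perm q s)) =1 permfun s}.
Proof.
move=> i; rewrite inE => /andP[i_gt0 i_le].
have k_lt : i.-1 < m by lia.
have -> : i = (Ordinal k_lt).+1 by rewrite /= prednK.
rewrite /down qpos_up_perm -(lift_max (Ordinal k_lt)) tau_tperm permfunE.
by rewrite up_perm_lift !lift_max permfunE.
Qed.

Lemma chiS m f p : m != 0 ->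
  chi m.+1 f p =
    let q := qpos m.+1 f in
    if (p != m.+1) && (p != q) then chi m (down m.+1 f) p
    else if (p == m.+1) && (p != q) then (chi m (down m.+1 f) q).+1
    else 1.
Proof. by case: m. Qed.

Lemma chi_up_perm m (q : 'I_m.+1) (s : 'S_m) p : m != 0 ->
  chi m.+1 (permfun (up_perm q s)) p =
    if (p != m.+1) && (p != q.+1) then chi m (permfun s) p
    else if (p == m.+1) && (p != q.+1) then (chi m (permfun s) q.+1).+1
    else 1.
Proof.
move=> m_neq0; rewrite chiS //= qpos_up_perm.
by rewrite !(chi_ext _ (down_up_perm q s)).
Qed.

Local Open Scope ring_scope.

Section MoveSums.
Variables (R : comPzRingType) (u : R).

Definition chi_gen n p := \sum_(s : 'S_n) u ^+ chi n (permfun s) p.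
Definition chi_gen_all n := \sum_(p < n) chi_gen n p.+1.

Lemma sumr_if_eq (V : nmodType) n c (a b : V) : (c < n)%N ->
  \sum_(i < n) (if i == c :> nat then b else a) = b + a *+ n.-1.
Proof.
move=> c_lt; rewrite (bigD1 (Ordinal c_lt)) //= eqxx; congr (_ + _).
rewrite (eq_bigr (fun _ => a)) ?sumr_const ?cardC1 ?card_ord // => i.
by rewrite -val_eqE => /negbTE->.
Qed.

Lemma chi_gen1 p : chi_gen 1 p = u.
Proof. by rewrite /chi_gen /= sumr_const card_Sn expr1. Qed.

Lemma chi_genS m p : (0 < p <= m)%N ->
  chi_gen m.+1 p = m%:R * chi_gen m p + u * m`!%:R.
Proof.
move=> p_le; have m_neq0 : m != 0%N by lia.
rewrite /chi_gen sum_up_perm.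
rewrite (eq_bigr (fun q : 'I_m.+1 => if q == p.-1 :> nat then u * m`!%:R else chi_gen m p)).
  by rewrite sumr_if_eq ?mulr_natl 1?addrC //; lia.
move=> q _; rewrite /chi_gen; case: eqP => q_p.
  rewrite (eq_bigr (fun _ => u)) ?sumr_const ?card_Sn ?mulr_natr // => s _.
  by rewrite chi_up_perm // ifF ?ifF ?expr1 //; lia.
by apply: eq_bigr => s _; rewrite chi_up_perm // ifT //; lia.
Qed.

Lemma chi_gen_top m : chi_gen m.+1 m.+1 = u * chi_gen_all m + u * m`!%:R.
Proof.
case: m => [|m]; first by rewrite chi_gen1 /chi_gen_all big_ord0 mulr0 add0r mulr1.
rewrite /chi_gen sum_up_perm big_ord_recr; congr (_ + _).
  rewrite /chi_gen_all mulr_sumr; apply: eq_bigr => q _.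
  rewrite /chi_gen mulr_sumr; apply: eq_bigr => s _.
  rewrite chi_up_perm // eqxx /= ifT ?exprS //.
  by have := ltn_ord q; rewrite eqSS; lia.
rewrite (eq_bigr (fun _ => u)) ?sumr_const ?card_Sn ?mulr_natr // => s _.
by rewrite chi_up_perm // !eqxx /= expr1.
Qed.

Lemma chi_gen_allS m : chi_gen_all m.+1 = (m%:R + u) * chi_gen_all m + u * m.+1`!%:R.
Proof.
case: m => [|m]; first by rewrite /chi_gen_all big_ord1 big_ord0 chi_gen1 mulr0 add0r mulr1.
rewrite /chi_gen_all big_ord_recr /= chi_gen_top.
rewrite (eq_bigr (fun p : 'I_m.+1 => m.+1%:R * chi_gen m.+1 p.+1 + u * m.+1`!%:R)); last first.
  by move=> p _; rewrite chi_genS //; move: (ltn_ord p); lia.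
rewrite big_split /= -mulr_sumr sumr_const card_ord -/(chi_gen_all m.+1).
rewrite (factS m.+1) (factS m) !natrM -mulr_natr -[m.+2]addn1 -[m.+1]addn1 !natrD.
ring.
Qed.

End MoveSums.

Section Coefficients.
Variables (R : fieldType) (u : R).
Hypothesis charR0 : [pchar R] =i pred0.

Lemma natS_neq0 n : n.+1%:R != 0 :> R.
Proof. by rewrite (pcharf0P _).1. Qed.

Lemma fact_neq0 n : n`!%:R != 0 :> R.
Proof. by rewrite (pcharf0P _).1 // -lt0n fact_gt0. Qed.

Lemma pow1mx0 (a : R) : pow1mx a 0 = 1.
Proof. by rewrite /pow1mx /gbinom big_ord0 expr0 mul1r divr1. Qed.

Lemma pow1mxS (a : R) m : pow1mx a m.+1 = pow1mx a m * (m%:R - a) / m.+1%:R.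
Proof.
rewrite /pow1mx /gbinom big_ord_recr /= factS natrM exprS.
by field; rewrite nat1r natS_neq0 fact_neq0.
Qed.

Lemma pow1mxN2 n : pow1mx (-2 : R) n = n.+1%:R.
Proof.
elim: n => [|n IHn]; first by rewrite pow1mx0.
rewrite pow1mxS IHn opprK.
by field; rewrite !nat1r natS_neq0.
Qed.

Lemma pow1mx_addr1 (a : R) m : pow1mx (a + 1) m.+1 = - (a + 1) / m.+1%:R * pow1mx a m.
Proof.
elim: m => [|m IHm]; first by rewrite pow1mxS !pow1mx0 !divr1 mulr1 mul1r sub0r.
rewrite pow1mxS IHm pow1mxS.
by field; rewrite nat1r -natrD !natS_neq0.
Qed.

Hypothesis u_neq2 : u != 2.

Lemma chi_gen_all_closed n :
  chi_gen_all u n = n`!%:R * (u / (2 - u)) * (pow1mx (-2) n - pow1mx (- u) n).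
Proof.
have u2 : 2 - u != 0 by rewrite subr_eq0 eq_sym.
elim: n => [|n IHn]; first by rewrite /chi_gen_all big_ord0 !pow1mx0 subrr mulr0.
rewrite chi_gen_allS IHn !pow1mxN2 pow1mxS opprK factS natrM.
by field; rewrite !nat1r natS_neq0 u2.
Qed.

End Coefficients.

Lemma Fcoef_chi_gen_all (R : fieldType) (u : R) n : Fcoef u n = n`!%:R^-1 * chi_gen_all u n.
Proof. by case: n => [|n] //; rewrite /chi_gen_all big_ord0 mulr0. Qed.

Lemma Gcoef_chi_gen (R : fieldType) (u : R) n :
  Gcoef u n.+1 = n.+1`!%:R^-1 * chi_gen u n.+1 n.+1.
Proof. by []. Qed.

Theorem mainTheorem8 (R : fieldType) (charR0 : [pchar R] =i pred0)
  (u : R) (hu1 : u != 1) (hu2 : u != 2) :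
  (forall n : nat,
     Fcoef u n = u / (2 - u) * (pow1mx (-2) n - pow1mx (- u) n)) /\
  (forall n : nat,
     Gcoef u n = u ^+ 2 / (2 - u) * (geomc R n + pow1mx (1 - u) n / (1 - u))
                 - cstc (u ^+ 2 / (1 - u)) n - u * log1mx R n).
Proof.
have u1 : 1 - u != 0 by rewrite subr_eq0 eq_sym.
have u2 : 2 - u != 0 by rewrite subr_eq0 eq_sym.
have factK n : n`!%:R^-1 * n`!%:R = 1 :> R by rewrite mulVf ?fact_neq0.
split=> [n | [|n]].
- by rewrite Fcoef_chi_gen_all chi_gen_all_closed // !mulrA factK mul1r.
- rewrite /Gcoef /cstc /log1mx /geomc /= pow1mx0 mulr0 subr0.
  by field; rewrite u1 u2.
rewrite Gcoef_chi_gen chi_gen_top chi_gen_all_closed // pow1mxN2 //.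
rewrite [in pow1mx (1 - u) _](addrC 1) pow1mx_addr1 //.
rewrite /cstc /log1mx /geomc /= subr0 factS natrM.
by field; rewrite nat1r natS_neq0 ?fact_neq0 // u1 u2.
Qed.
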